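(* Let $\mathcal{A}$ be an alphabet with $d\ge3$ letters, $B\in\mathcal{A}$, $\mathcal{A}'=\mathcal{A}\setminus\{B\}$, let $\pi$ be an irreducible permutation on $\mathcal{A}$, and let $\pi'$ be obtained from $\pi$ by removing $B$ from the top and bottom rows; assume $\pi'$ is irreducible. Then either $g(\pi)=g(\pi')$ or $g(\pi)=g(\pi')+1$. Moreover, the following are equivalent: (1) $g(\pi)=g(\pi')$; (2) $H(\pi)$ is spanned by $\{\Omega(\pi)e_x: x\in\mathcal{A}'\}$; (3) $e_B\notin H(\pi)$; (4) $e_B$ does not belong to the span of $\{\Omega(\pi)e_x: x\in\mathcal{A}'\}$; (5) the natural projection $P:\mathbb{R}^{\mathcal{A}}\to\mathbb{R}^{\mathcal{A}'}$ restricts to a symplectic isomorphism $(H(\pi),\omega_\pi)\to(H(\pi'),\omega_{\pi'})$.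
   Context: A permutation on $\mathcal{A}$ is a pair $\pi=(\pi_0,\pi_1)$ of bijections $\mathcal{A}\to\{1,\dots,\#\mathcal{A}\}$ (top and bottom rows); irreducible means no $1\le k<\#\mathcal{A}$ with $\pi_0^{-1}(\{1,\dots,k\})=\pi_1^{-1}(\{1,\dots,k\})$. $\Omega(\pi)$ is the operator on $\mathbb{R}^{\mathcal{A}}$ (canonical basis $e_x$) with $\langle\Omega(\pi)e_x,e_y\rangle=1$ if $\pi_0(x)>\pi_0(y),\pi_1(x)<\pi_1(y)$; $-1$ if $\pi_0(x)<\pi_0(y),\pi_1(x)>\pi_1(y)$; $0$ otherwise. $H(\pi)=\Omega(\pi)\mathbb{R}^{\mathcal{A}}$, $2g(\pi)=\dim H(\pi)$, and $\omega_\pi(\Omega(\pi)u,\Omega(\pi)v)=\langle u,\Omega(\pi)v\rangle$ is a symplectic form on $H(\pi)$; similarly for $\pi'$ on $\mathbb{R}^{\mathcal{A}'}$. *)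

From HB Require Import structures.
From mathcomp Require Import all_boot all_order all_algebra.
From mathcomp Require Import reals.
Set Implicit Arguments. Unset Strict Implicit. Unset Printing Implicit Defensive.
Import Order.TTheory GRing.Theory Num.Theory.
Local Open Scope ring_scope.

(* A "permutation" on a finite alphabet T is a pair (p0, p1) of bijections
   T -> {1, ..., #|T|} (top and bottom rows).  *)
Definition is_bij_row (T : finType) (p : T -> nat) : Prop :=
  injective p /\ (forall x, (1 <= p x <= #|T|)%N).

Definition irreducible_perm (T : finType) (p0 p1 : T -> nat) : Prop :=
  ~ (exists k : nat, [/\ (1 <= k)%N, (k < #|T|)%N &
        [set x | (p0 x <= k)%N] = [set x | (p1 x <= k)%N]]).

Definition sub_alph (A : finType) (B : A) : finType := {x : A | x != B}.

Definition remove_letter (A : finType) (B : A) (p : A -> nat)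
    : sub_alph B -> nat :=
  fun x => (#|[set y : sub_alph B | (p (val y) < p (val x))%N]|).+1.
Arguments remove_letter {A} B p.

(* Vectors in R^T are row vectors 'rV[R]_#|T|, coordinates indexed through
   enum_val / enum_rank.  Row x of Omega is the vector Omega(pi) e_x, i.e.
   (Omega i j) = < Omega(pi) e_x, e_y > with x = enum_val i, y = enum_val j.
   Hence Omega(pi) u = u *m Omega and <u, v> = u *m v^T. *)
Definition Omega (R : nzRingType) (T : finType) (p0 p1 : T -> nat)
    : 'M[R]_#|T| :=
  \matrix_(i, j)
    let x := enum_val i in let y := enum_val j in
    if (p0 y < p0 x)%N && (p1 x < p1 y)%N then 1
    else if (p0 x < p0 y)%N && (p1 y < p1 x)%N then -1 else 0.

Definition evec (R : nzRingType) (T : finType) (x : T) : 'rV[R]_#|T| :=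
  delta_mx 0 (enum_rank x).

(* dim H(pi) = 2 g(pi), where H(pi) = Omega(pi) R^T is the row space of Omega *)
Definition twice_genus (R : fieldType) (T : finType) (p0 p1 : T -> nat) : nat :=
  \rank (Omega R p0 p1).

Definition span_sub (R : fieldType) (A : finType) (B : A) (p0 p1 : A -> nat)
    : 'M[R]_#|A| :=
  (\sum_(x : A | x != B) <<row (enum_rank x) (Omega R p0 p1)>>)%MS.

Definition projP (R : nzRingType) (A : finType) (B : A)
    : 'M[R]_(#|A|, #|sub_alph B|) :=
  \matrix_(i, j) (enum_val i == val (enum_val j))%:R.
Arguments projP R {A} B.

(* P restricts to a symplectic isomorphism (H(pi), w_pi) -> (H(pi'), w_pi'),
   where w_pi(Omega u, Omega v) = <u, Omega v>. *)
Definition sympl_iso (R : fieldType) (A : finType) (B : A) (p0 p1 : A -> nat)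
    : Prop :=
  let M := Omega R p0 p1 in
  let M' := Omega R (remove_letter B p0) (remove_letter B p1) in
  let P := projP R B in
  [/\ (forall v : 'rV_#|A|, (v <= M)%MS -> (v *m P <= M')%MS),
      (forall v : 'rV_#|A|, (v <= M)%MS -> v *m P = 0 -> v = 0),
      (forall w : 'rV_#|sub_alph B|, (w <= M')%MS ->
          exists2 v : 'rV_#|A|, (v <= M)%MS & v *m P = w) &
      (forall (u v : 'rV_#|A|) (u' v' : 'rV_#|sub_alph B|),
          u' *m M' = (u *m M) *m P -> v' *m M' = (v *m M) *m P ->
          u' *m (v' *m M')^T = u *m (v *m M)^T)].

(* Write P for the projection R^A -> R^A' and e for e_B.  Since (P, e^T) is
   an orthonormal change of basis and removing B keeps the relative order of
   the other letters, Omega(pi) is the bordered matrix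
   [[Omega(pi'), c], [-c^T, 0]] with Omega(pi') = P^T Omega(pi) P and
   c = P^T Omega(pi) e^T.  If c^T = y Omega(pi') lies in the row space of
   Omega(pi'), then Omega(pi) = U Omega(pi') U^T with U = P - e^T y and
   U^T P = 1: P maps H(pi) symplectically and isomorphically onto H(pi'),
   and all five conditions hold.  Otherwise bordering raises the rank by
   exactly two, and a kernel vector z of Omega(pi') with z^T c <> 0 gives
   z^T P^T Omega(pi) = (z^T c) e, so e lies in the span of the
   Omega(pi) e_x, x in A', and all five conditions fail. *)

From mathcomp Require Import all_boot all_algebra.
From mathcomp Require Import reals zify.
Set Implicit Arguments.
Unset Strict Implicit.
Unset Printing Implicit Defensive.
Import GRing.Theory Num.Theory.
Local Open Scope ring_scope.

Lemma quad_form_skew_eq0 (F : fieldType) k (N : 'M[F]_k) (x : 'rV_k) :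
  2%:R != 0 :> F -> N^T = - N -> x *m N *m x^T = 0.
Proof.
move=> two_neq0 skewN; set s := x *m N *m x^T.
have sT : s^T = - s by rewrite /s !trmx_mul trmxK skewN mulNmx mulmxN mulmxA.
have s00 : s 0 0 *+ 2 = 0.
  have sT00 : s^T 0 0 = s 0 0 by rewrite mxE.
  by rewrite mulr2n -{2}sT00 sT [(- s) 0 0]mxE subrr.
apply/matrixP=> i j; rewrite !ord1 [RHS]mxE; apply/eqP.
by move: s00 => /eqP; rewrite -mulr_natl mulf_eq0 (negbTE two_neq0).
Qed.

Lemma rank_addsmx_notin (F : fieldType) k n (S : 'M[F]_(k, n)) (v : 'rV_n) :
  ~~ (v <= S)%MS -> \rank (S + v)%MS = (\rank S).+1.
Proof.
move=> vS; apply/eqP; rewrite eqn_leq; apply/andP; split.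
  apply: leq_trans (mxrank_adds_leqif _ _).1 _.
  by rewrite -[(\rank S).+1]addn1 leq_add2l rank_leq_row.
by apply: rank_ltmx; rewrite ltmxE addsmxSl addsmx_sub submx_refl.
Qed.

Definition symplectic_projection {F : fieldType} {n m : nat}
    (M : 'M[F]_n) (K : 'M[F]_m) (P : 'M[F]_(n, m)) : Prop :=
  [/\ (forall v : 'rV_n, (v <= M)%MS -> (v *m P <= K)%MS),
      (forall v : 'rV_n, (v <= M)%MS -> v *m P = 0 -> v = 0),
      (forall w : 'rV_m, (w <= K)%MS ->
          exists2 v : 'rV_n, (v <= M)%MS & v *m P = w) &
      (forall (u v : 'rV_n) (u' v' : 'rV_m),
          u' *m K = (u *m M) *m P -> v' *m K = (v *m M) *m P ->
          u' *m (v' *m K)^T = u *m (v *m M)^T)].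

Section Compression.
Variables (F : fieldType) (n m : nat).
Variables (M : 'M[F]_n) (P : 'M[F]_(n, m)) (e : 'rV[F]_n).
Hypotheses (two_neq0 : 2%:R != 0 :> F) (skewM : M^T = - M).
Hypotheses (PtP : P^T *m P = 1%:M) (PPt_e : P *m P^T + e^T *m e = 1%:M).
Hypotheses (eP : e *m P = 0) (e_neq0 : e != 0).

Variable K : 'M[F]_m.
Hypothesis K_def : K = P^T *m M *m P.
Local Notation c := (P^T *m M *m e^T).

Lemma skew_compression : K^T = - K.
Proof. by rewrite K_def !trmx_mul trmxK skewM mulNmx mulmxN mulmxA. Qed.

Lemma e_M_P : e *m M *m P = - c^T.
Proof. by rewrite !trmx_mul !trmxK skewM mulNmx mulmxN opprK mulmxA. Qed.

Lemma Pt_M_split : P^T *m M = K *m P^T + c *m e.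
Proof. by rewrite K_def -{1}[M]mulmx1 -PPt_e !mulmxDr !mulmxA. Qed.

Lemma e_M_split : e *m M = - c^T *m P^T.
Proof.
rewrite -{1}[M]mulmx1 -PPt_e !mulmxDr !mulmxA e_M_P.
by rewrite quad_form_skew_eq0 // mul0mx addr0.
Qed.

Lemma M_split : M = P *m (P^T *m M) + e^T *m (e *m M).
Proof. by rewrite !mulmxA -mulmxDl PPt_e mul1mx. Qed.

Lemma M_eqmx_addsmx : (M == P^T *m M + e *m M)%MS.
Proof.
rewrite addsmx_sub !submxMl andbT {1}M_split.
by rewrite addmx_sub // (submx_trans (submxMl _ _)) ?addsmxSl ?addsmxSr.
Qed.

Lemma compression_factor : (c^T <= K)%MS ->
  exists2 U : 'M_(n, m), U^T *m P = 1%:M & M = U *m K *m U^T.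
Proof.
case/submxP=> y cTy; set U := P - e^T *m y.
have UT : U^T = P^T - y^T *m e by rewrite linearB /= trmx_mul trmxK.
exists U; first by rewrite UT mulmxBl PtP -mulmxA eP mulmx0 subr0.
have c_y : c = - (K *m y^T).
  by rewrite -[c]trmxK cTy trmx_mul skew_compression mulNmx.
have PtM : P^T *m M = K *m U^T.
  by rewrite {1}Pt_M_split c_y UT mulmxBr mulNmx mulmxA.
have yKU : y *m K *m U^T = y *m K *m P^T.
  rewrite UT mulmxBr [y *m K *m (y^T *m e)]mulmxA.
  by rewrite quad_form_skew_eq0 ?skew_compression // mul0mx subr0.
have -> : U *m K *m U^T = P *m (K *m U^T) - e^T *m (y *m K *m U^T).
  by rewrite /U !mulmxBl !mulmxA.
by rewrite {1}M_split e_M_split cTy {1}PtM yKU mulNmx mulmxN.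
Qed.

Section Factored.
Variable U : 'M[F]_(n, m).
Hypotheses (UtP : U^T *m P = 1%:M) (M_factor : M = U *m K *m U^T).

Lemma M_P_factor : M *m P = U *m K.
Proof. by rewrite {1}M_factor -mulmxA UtP mulmx1. Qed.

Lemma Pt_M_factor : P^T *m M = K *m U^T.
Proof.
have PtU : P^T *m U = 1%:M by rewrite -[U]trmxK -trmx_mul UtP trmx1.
by rewrite {1}M_factor !mulmxA PtU mul1mx.
Qed.

Lemma rank_factor : \rank M = \rank K.
Proof.
apply/eqP; rewrite eqn_leq; apply/andP; split.
  by rewrite {1}M_factor (leq_trans (mxrankM_maxl _ _)) ?mxrankM_maxr.
by rewrite K_def (leq_trans (mxrankM_maxl _ _)) ?mxrankM_maxr.
Qed.

Lemma Pt_M_eqmx_factor : (P^T *m M == M)%MS.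
Proof.
apply/andP; split; first exact: submxMl.
by rewrite {1}M_factor -mulmxA -Pt_M_factor submxMl.
Qed.

Lemma M_P_Ut_factor : M *m P *m U^T = M.
Proof. by rewrite M_P_factor -M_factor. Qed.

Lemma e_notin_factor : ~~ (e <= M)%MS.
Proof.
apply: contraNN e_neq0 => /submxP[x ex]; apply/eqP.
by rewrite ex -M_P_Ut_factor !mulmxA -ex eP mul0mx.
Qed.

Lemma symplectic_projection_factor : symplectic_projection M K P.
Proof.
split.
- by move=> _ /submxP[x ->]; rewrite -mulmxA M_P_factor mulmxA submxMl.
- move=> _ /submxP[x ->] xMP0.
  by rewrite -M_P_Ut_factor !mulmxA xMP0 mul0mx.
- move=> _ /submxP[x ->]; exists (x *m K *m U^T).
    by rewrite -mulmxA -Pt_M_factor mulmxA submxMl.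
  by rewrite -mulmxA UtP mulmx1.
move=> u v u' v' u'K v'K.
have vMPt : (v *m M *m P)^T = - (K *m U^T *m v^T).
  by rewrite !trmx_mul skewM mulNmx mulmxN mulmxA {1}Pt_M_factor.
rewrite v'K vMPt mulmxN.
have -> : u' *m (K *m U^T *m v^T) = u' *m K *m U^T *m v^T by rewrite !mulmxA.
have -> : u' *m K *m U^T = u *m M by rewrite u'K -{2}M_P_Ut_factor !mulmxA.
by rewrite trmx_mul skewM mulNmx mulmxN mulmxA.
Qed.

End Factored.

Section Defect.
Hypothesis cT_notin : ~~ (c^T <= K)%MS.

Lemma e_sub_Pt_M_defect : (e <= P^T *m M)%MS.
Proof.
(* The columns of [Ck] span the kernel of [K]; as [c^T] is not in the row
   space of [K], one of them pairs nontrivially with [c]. *)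
set Ck := cokermx K; set w := Ck^T *m c.
have CkK : Ck^T *m K = 0.
  by rewrite -[K]trmxK -trmx_mul skew_compression mulNmx mulmx_coker oppr0 trmx0.
have w_neq0 : w != 0 by rewrite /w -[c]trmxK -trmx_mul trmx_eq0 -submxE.
have CkPtM : Ck^T *m (P^T *m M) = w *m e.
  by rewrite Pt_M_split mulmxDr mulmxA CkK mul0mx add0r mulmxA.
have [i wi_neq0] := cV0Pn _ w_neq0.
rewrite -(eqmx_scale _ wi_neq0).
have -> : w i 0 *: e = row i (w *m e).
  by rewrite row_mul [row i w]mx11_scalar mul_scalar_mx [row i w 0 0]mxE.
rewrite -CkPtM.
exact: submx_trans (row_sub _ _) (submxMl _ _).
Qed.

Lemma Pt_M_eqmx_defect : (P^T *m M == K *m P^T + e)%MS.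
Proof.
have eS := e_sub_Pt_M_defect.
apply/andP; split.
  rewrite Pt_M_split addmx_sub ?addsmxSl //.
  by rewrite (submx_trans (submxMl _ _)) ?addsmxSr.
rewrite addsmx_sub eS andbT.
have -> : K *m P^T = P^T *m M - c *m e by rewrite [X in X - _]Pt_M_split addrK.
by rewrite addmx_sub // eqmx_opp (submx_trans (submxMl _ _)).
Qed.

Lemma rank_Pt_M_defect : \rank (P^T *m M) = (\rank K).+1.
Proof.
have rowfree_Pt : row_free P^T by apply/row_freeP; exists P.
rewrite (eqmx_rank Pt_M_eqmx_defect) rank_addsmx_notin ?mxrankMfree //.
apply: contraNN e_neq0 => /submxP[x ex]; apply/eqP.
have xK0 : x *m K = 0 by rewrite -eP ex -!mulmxA PtP mulmx1.
by rewrite ex mulmxA xK0 mul0mx.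
Qed.

Lemma rank_defect : \rank M = (\rank K + 2)%N.
Proof.
rewrite (eqmx_rank M_eqmx_addsmx) e_M_split mulNmx.
rewrite (adds_eqmx (eqmx_refl _) (eqmx_opp _)) rank_addsmx_notin.
  by move: rank_Pt_M_defect => ->; rewrite addn2.
apply: contra cT_notin => /(submxMr P).
by rewrite -[c^T *m P^T *m P]mulmxA PtP mulmx1 -K_def.
Qed.

End Defect.

Lemma compression_rank_tfae k (S : 'M_(k, n)) : (S == P^T *m M)%MS ->
  (\rank M = \rank K \/ \rank M = (\rank K + 2)%N) /\
  [<-> \rank M = \rank K; (S == M)%MS; ~~ (e <= M)%MS; ~~ (e <= S)%MS;
       symplectic_projection M K P].
Proof.
move=> /eqmxP S_PtM.
have [cT_in | cT_notin] := boolP (c^T <= K)%MS.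
  have [U UtP M_factor] := compression_factor cT_in.
  have rkM := rank_factor M_factor.
  have S_M : (S == M)%MS by rewrite !S_PtM; apply: Pt_M_eqmx_factor UtP M_factor.
  have e_notin_M := e_notin_factor UtP M_factor.
  have e_notin_S : ~~ (e <= S)%MS by rewrite (eqmxP S_M).
  have sympl := symplectic_projection_factor UtP M_factor.
  by split; [left | tfae].
have rkM := rank_defect cT_notin.
have e_in_S : (e <= S)%MS by rewrite S_PtM; apply: e_sub_Pt_M_defect.
have e_in_M : (e <= M)%MS by apply: submx_trans e_in_S _; rewrite S_PtM submxMl.
have rkM_neq : \rank M <> \rank K by rewrite rkM; lia.
have S_neq_M : ~~ (S == M)%MS.
  apply/negP => /eqmx_rank; rewrite S_PtM rank_Pt_M_defect // rkM; lia.
have not_sympl : ~ symplectic_projection M K P.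
  by case=> _ P_inj _ _; move/eqP: e_neq0; apply; apply: P_inj.
split; first by right.
tfae; by [move/rkM_neq | rewrite (negbTE S_neq_M) | rewrite e_in_M
          | rewrite e_in_S | move/not_sympl].
Qed.

End Compression.

Definition sub_alph_rank (A : finType) (B : A) (j : 'I_#|sub_alph B|) : 'I_#|A| :=
  enum_rank (val (enum_val j)).

Lemma sub_alph_rank_inj (A : finType) (B : A) : injective (@sub_alph_rank A B).
Proof. by move=> j k /enum_rank_inj /val_inj /enum_val_inj. Qed.

Lemma remove_letter_ltE (A : finType) (B : A) (p : A -> nat) (x y : sub_alph B) :
  (remove_letter B p x < remove_letter B p y)%N = (p (val x) < p (val y))%N.
Proof.
rewrite /remove_letter ltnS; apply/idP/idP.
  apply: contraLR; rewrite -!leqNgt => le_yx.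
  by apply: subset_leq_card; apply/subsetP => z; rewrite !inE => /leq_trans; apply.
move=> lt_xy; apply: proper_card; apply/properP; split.
  by apply/subsetP => z; rewrite !inE => /ltn_trans; apply.
by exists x; rewrite !inE ?ltnn.
Qed.

Lemma Omega_skew (R : nzRingType) (T : finType) (p0 p1 : T -> nat) :
  (Omega R p0 p1)^T = - Omega R p0 p1.
Proof.
apply/matrixP => i j; rewrite !mxE /=.
by repeat case: ifP => ?; rewrite ?oppr0 ?opprK //; lia.
Qed.

Section Projection.
Variables (R : fieldType) (A : finType) (B : A).

Local Notation rk := (@sub_alph_rank A B).
Local Notation P := (projP R B).
Local Notation e := (evec R B).

Lemma projP_colsub : P = colsub rk 1%:M.
Proof. by apply/matrixP=> i j; rewrite !mxE (can2_eq enum_valK enum_rankK). Qed.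

Lemma mulmx_projP l (N : 'M[R]_(l, #|A|)) : N *m P = colsub rk N.
Proof. by rewrite projP_colsub mulmx_colsub mulmx1. Qed.

Lemma tr_projP_mulmx l (N : 'M[R]_(#|A|, l)) : P^T *m N = rowsub rk N.
Proof. by rewrite projP_colsub trmx_mxsub trmx1 -rowsubE. Qed.

Lemma tr_projP_projP : P^T *m P = 1%:M.
Proof.
rewrite tr_projP_mulmx projP_colsub; apply/matrixP=> j k.
by rewrite !mxE (inj_eq (@sub_alph_rank_inj A B)).
Qed.

Lemma evec_projP : e *m P = 0.
Proof.
rewrite mulmx_projP; apply/matrixP => i j; rewrite !mxE (inj_eq enum_rank_inj).
by rewrite (negbTE (valP (enum_val j))) andbF.
Qed.

Lemma evec_neq0 : e != 0.
Proof.
apply/negP => /eqP/matrixP/(_ 0 (enum_rank B)); rewrite !mxE !eqxx /=.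
by move/eqP; rewrite oner_eq0.
Qed.

Lemma projP_evec_partition : P *m P^T + e^T *m e = 1%:M.
Proof.
apply/matrixP=> i i'; rewrite projP_colsub !mxE big_ord1 !mxE /=.
under eq_bigr do rewrite !mxE.
have rkNB j : (rk j == enum_rank B) = false.
  by rewrite (inj_eq enum_rank_inj) (negbTE (valP (enum_val j))).
case: (eqVneq (enum_val i) B) => [iB | iNB].
  have -> : i = enum_rank B by rewrite -iB enum_valK.
  rewrite big1 => [|j _]; last by rewrite eq_sym rkNB mul0r.
  by rewrite add0r eqxx mul1r eq_sym.
have [j0 ->] : exists j0, i = rk j0.
  exists (enum_rank (exist _ (enum_val i) iNB)).
  by rewrite /sub_alph_rank enum_rankK enum_valK.
rewrite (bigD1 j0) //= big1 => [|j j_neq]; last first.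
  by rewrite (inj_eq (@sub_alph_rank_inj A B)) eq_sym (negbTE j_neq) mul0r.
by rewrite eqxx mul1r rkNB mul0r !addr0 eq_sym.
Qed.

Lemma Omega_remove_letter (p0 p1 : A -> nat) :
  Omega R (remove_letter B p0) (remove_letter B p1)
  = P^T *m Omega R p0 p1 *m P.
Proof.
rewrite mulmx_projP tr_projP_mulmx; apply/matrixP => j k.
by rewrite !mxE /sub_alph_rank !enum_rankK !remove_letter_ltE.
Qed.

Lemma span_sub_eqmx (p0 p1 : A -> nat) :
  (span_sub R B p0 p1 == P^T *m Omega R p0 p1)%MS.
Proof.
rewrite tr_projP_mulmx; apply/andP; split.
  apply/sumsmx_subP => x xNB; rewrite genmxE.
  have -> : enum_rank x = rk (enum_rank (exist _ x xNB)).
    by rewrite /sub_alph_rank enum_rankK.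
  by rewrite -row_rowsub row_sub.
apply/row_subP => j; rewrite row_rowsub.
by apply: (sumsmx_sup (val (enum_val j))); rewrite ?(valP (enum_val j)) ?genmxE.
Qed.

End Projection.

Theorem lemma5p3 (R : realType) (A : finType) (B : A) (p0 p1 : A -> nat) :
  (3 <= #|A|)%N ->
  is_bij_row p0 -> is_bij_row p1 ->
  irreducible_perm p0 p1 ->
  irreducible_perm (remove_letter B p0) (remove_letter B p1) ->
  (twice_genus R p0 p1 = twice_genus R (remove_letter B p0) (remove_letter B p1)
   \/ twice_genus R p0 p1
        = (twice_genus R (remove_letter B p0) (remove_letter B p1) + 2)%N)
  /\
  [<-> twice_genus R p0 p1 = twice_genus R (remove_letter B p0) (remove_letter B p1);
       (span_sub R B p0 p1 == Omega R p0 p1)%MS;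
       ~~ (evec R B <= Omega R p0 p1)%MS;
       ~~ (evec R B <= span_sub R B p0 p1)%MS;
       sympl_iso R B p0 p1].
Proof.
move=> _ _ _ _ _.
have two_neq0 : 2%:R != 0 :> R by rewrite pnatr_eq0.
exact: (compression_rank_tfae two_neq0 (Omega_skew R p0 p1) (tr_projP_projP R B)
  (projP_evec_partition R B) (evec_projP R B) (evec_neq0 R B)
  (Omega_remove_letter R B p0 p1) (span_sub_eqmx R B p0 p1)).
Qed.
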